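(* Let $G$ be a nice graph with no two adjacent vertices of the same degree. If $\chi'_{qm}(G)=2$, then $\chi'_{qm\Sigma}(G)=2$.
   Context: All graphs are simple and finite. A $k$-edge-coloring of $G$ is any map $c:E(G)\to\{1,\dots,k\}$ (adjacent edges may share colors). It induces $\sigma_c(v)=\sum_{u\in N(v)}c(vu)$. The coloring is neighbor sum distinguishing (NSD) if $\sigma_c(u)\ne\sigma_c(v)$ for every edge $uv$. It is quasi-majority if every vertex $v$ is incident to at most $\lceil d(v)/2\rceil$ edges of each single color. $\chi'_{qm}(G)$ is the least $k$ such that $G$ has a quasi-majority $k$-edge-coloring, and $\chi'_{qm\Sigma}(G)$ the least $k$ such that $G$ has a $k$-edge-coloring that is both quasi-majority and NSD. A graph is nice if it has no connected component isomorphic to $K_2$. *)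

(* An edge-colouring is represented by c : T -> T -> nat,
   read on edges only, required to be symmetric on edges (so it is a map on
   unordered edges) with values in {1,...,k}. *)
From mathcomp Require Import all_boot.
Set Implicit Arguments. Unset Strict Implicit. Unset Printing Implicit Defensive.

Section Graphs.
Variables (T : finType) (e : rel T).

Definition simple_graph := symmetric e /\ irreflexive e.

Definition deg (v : T) : nat := #|[set u | e v u]|.

(* no connected component isomorphic to K2 *)
Definition nice : Prop :=
  ~ exists u v, e u v /\ [set w | connect e u w] = [set u; v].

Definition no_adj_same_degree : Prop :=
  forall u v, e u v -> deg u <> deg v.

Definition edge_coloring (k : nat) (c : T -> T -> nat) : Prop :=
  forall u v, e u v -> c u v = c v u /\ 1 <= c u v <= k.

Definition sigma (c : T -> T -> nat) (v : T) : nat := \sum_(u | e v u) c v u.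

Definition nsd (c : T -> T -> nat) : Prop :=
  forall u v, e u v -> sigma c u <> sigma c v.

Definition quasi_majority (c : T -> T -> nat) : Prop :=
  forall v (col : nat), #|[set u | e v u && (c v u == col)]| <= uphalf (deg v).

Definition has_qm (k : nat) : Prop :=
  exists c, edge_coloring k c /\ quasi_majority c.

Definition has_qmS (k : nat) : Prop :=
  exists c, edge_coloring k c /\ quasi_majority c /\ nsd c.

Definition chi_qm_eq (k : nat) : Prop :=
  has_qm k /\ forall j, j < k -> ~ has_qm j.

Definition chi_qmS_eq (k : nat) : Prop :=
  has_qmS k /\ forall j, j < k -> ~ has_qmS j.

End Graphs.

(* In a quasi-majority 2-edge-colouring a vertex of degree d meets between
   floor(d/2) and ceil(d/2) edges of colour 2, so its colour sum d + n_2
   satisfies |2 sigma - 3 d| <= 1.  Equal sums at the ends of an edge would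
   therefore force |3 d_u - 3 d_v| <= 2, i.e. equal degrees.  Hence every
   such colouring is already neighbour sum distinguishing, and since an NSD
   quasi-majority colouring is in particular a quasi-majority one, the two
   minima coincide. *)
From mathcomp Require Import all_boot zify.

Section TwoColorings.
Variables (T : finType) (e : rel T).

Definition color_deg (c : T -> T -> nat) (v : T) (k : nat) : nat :=
  #|[set u | e v u && (c v u == k)]|.

Variable c : T -> T -> nat.
Hypothesis c_col : edge_coloring e 2 c.

Lemma deg_two_colors v : deg e v = color_deg c v 1 + color_deg c v 2.
Proof.
rewrite /deg /color_deg -!sum1dep_card !big_mkcondr -big_split /=.
apply: eq_bigr => u /c_col[_].
by case: (c v u) => [|[|[|k]]].
Qed.

Lemma sigma_two_colors v : sigma e c v = deg e v + color_deg c v 2.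
Proof.
rewrite /sigma /deg /color_deg -!sum1dep_card big_mkcondr -big_split /=.
apply: eq_bigr => u /c_col[_].
by case: (c v u) => [|[|[|k]]].
Qed.

Hypothesis c_qm : quasi_majority e c.

Lemma sigma_two_colors_bounds v :
  3 * deg e v <= (sigma e c v).*2 + 1 /\ (sigma e c v).*2 <= 3 * deg e v + 1.
Proof.
have n1_le := c_qm v 1; have n2_le := c_qm v 2.
rewrite sigma_two_colors.
move: n1_le n2_le (deg_two_colors v) (odd_double_half (deg e v)).
rewrite /color_deg uphalf_half -!muln2.
by case: (odd (deg e v)) => /=; lia.
Qed.

Lemma qm_two_colors_nsd : no_adj_same_degree e -> nsd e c.
Proof.
move=> deg_neq u v uv sigma_eq; apply: (deg_neq _ _ uv).
have [lo_u hi_u] := sigma_two_colors_bounds u.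
have [lo_v hi_v] := sigma_two_colors_bounds v.
move: lo_u hi_u lo_v hi_v; rewrite sigma_eq -!muln2; lia.
Qed.

End TwoColorings.

Lemma has_qmS_has_qm (T : finType) (e : rel T) k : has_qmS e k -> has_qm e k.
Proof. by case=> c [c_col [c_qm _]]; exists c. Qed.

Theorem mainTheorem16 (T : finType) (e : rel T) :
  simple_graph e -> nice e -> no_adj_same_degree e ->
  chi_qm_eq e 2 -> chi_qmS_eq e 2.
Proof.
move=> _ _ deg_neq [[c [c_col c_qm]] qm_min]; split.
  by exists c; do !split => //; apply: qm_two_colors_nsd.
by move=> j lt_j2 /has_qmS_has_qm; apply: qm_min.
Qed.
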